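(* Let $F$ be a non-archimedean local field of characteristic zero with ring of integers $\mathfrak{o}$ and maximal ideal $\mathfrak{p}$. Let $a,b,c\in F$ with $d=b^2-4ac\neq0$ satisfy (A1) $a,b\in\mathfrak{o}$, $c\in\mathfrak{o}^\times$, and (A2) if $d\notin F^{\times2}$ then $d$ generates the discriminant ideal of $L/F$, and if $d\in F^{\times2}$ then $d\in\mathfrak{o}^\times$. Let $\xi_0=\frac{-b+\sqrt d}2$ and $\alpha=\frac{b+\sqrt d}{2c}$ if $L$ is a field, and $\xi_0=(\frac{-b+\sqrt d}2,\frac{-b-\sqrt d}2)$, $\alpha=(\frac{b+\sqrt d}{2c},\frac{b-\sqrt d}{2c})$ if $L=F\oplus F$. Then: (i) $\{1,\xi_0\}$ is a basis of the free $\mathfrak{o}$-module $\mathfrak{o}_L$, and so is $\{1,\alpha\}$; (ii) there is no $x\in\mathfrak{o}$ with $\alpha+x\in\mathfrak{P}$.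
   Context: $L=F(\sqrt d)$ if $d\notin F^{\times2}$, and $L=F\oplus F$ (with $F$ embedded diagonally) if $d\in F^{\times2}$. $\mathfrak{o}_L$ is the ring of integers of $L$ if $L$ is a field, and $\mathfrak{o}\oplus\mathfrak{o}$ otherwise. $\mathfrak{P}=\mathfrak{p}\mathfrak{o}_L$. *)

From HB Require Import structures.
From mathcomp Require Import all_boot all_order all_algebra all_field.
Set Implicit Arguments. Unset Strict Implicit. Unset Printing Implicit Defensive.
Import Order.TTheory GRing.Theory Num.Theory.
Local Open Scope ring_scope.

Section LocalField.
Variables (F : fieldType) (v : F -> int).

(* the valuation v is only meaningful on nonzero elements *)
Definition vint (x : F) : Prop := x = 0 \/ 0 <= v x.
Definition vmax (x : F) : Prop := x = 0 \/ 1 <= v x.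
Definition vunit (x : F) : Prop := x <> 0 /\ v x = 0.

Record nonarch_local_field_char0 : Prop := {
  v_mul : forall x y, x != 0 -> y != 0 -> v (x * y) = v x + v y;
  v_add : forall x y, x != 0 -> y != 0 -> x + y != 0 ->
            Num.min (v x) (v y) <= v (x + y);
  v_surj : forall n : int, exists x, x != 0 /\ v x = n;
  v_complete : forall u : nat -> F,
     (forall N : int, exists n0, forall m n, (n0 <= m)%N -> (n0 <= n)%N ->
         u m - u n = 0 \/ N <= v (u m - u n)) ->
     exists l, forall N : int, exists n0, forall n, (n0 <= n)%N ->
         u n - l = 0 \/ N <= v (u n - l);
  residue_finite : exists s : seq F, (forall y, y \in s -> vint y) /\
     forall x, vint x -> exists2 y, y \in s & vmax (x - y);
  char0 : [pchar F] =i pred0 }.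

Definition is_square (d : F) : Prop := exists y : F, y ^+ 2 = d.

Section Alg.
Variable A : lalgType F.
Definition o_basis2 (oA : A -> Prop) (e1 e2 : A) : Prop :=
  [/\ oA e1, oA e2,
      (forall z, oA z <-> exists x y, [/\ vint x, vint y & z = x *: e1 + y *: e2])
    & (forall x y, vint x -> vint y -> x *: e1 + y *: e2 = 0 -> x = 0 /\ y = 0)].

Definition ext_ideal (oA : A -> Prop) (z : A) : Prop :=
  exists s : seq (F * A), (forall q, q \in s -> vmax q.1 /\ oA q.2) /\
     z = \sum_(q <- s) q.1 *: q.2.
End Alg.

Section Ext.
Variable L : fieldExtType F.
Definition intL (z : L) : Prop :=
  exists p : {poly F}, [/\ p \is monic, (forall i, vint p`_i) &
     root (map_poly (in_alg L) p) z].

Definition trL (z : L) : F :=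
  \tr (passmx.mxof (vbasis {:L}) (vbasis {:L}) (amulr z)).

Definition disc2 (x1 x2 : L) : F :=
  \det (\matrix_(i < 2, j < 2)
          trL ((if i == 0 :> nat then x1 else x2) * (if j == 0 :> nat then x1 else x2))).

Definition in_disc_ideal (y : F) : Prop :=
  exists s : seq (F * (L * L)),
    (forall q, q \in s -> [/\ vint q.1, intL q.2.1 & intL q.2.2]) /\
    y = \sum_(q <- s) q.1 * disc2 q.2.1 q.2.2.

Definition generates_disc_ideal (d : F) : Prop :=
  forall y, in_disc_ideal y <-> exists2 r, vint r & y = r * d.
End Ext.

(* the split algebra F + F with F diagonally embedded and o_L = o + o *)
Definition intSplit (z : (F^o * F^o)%type) : Prop := vint z.1 /\ vint z.2.

End LocalField.

From HB Require Import structures.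
From mathcomp Require Import all_boot all_order all_algebra all_field.
From mathcomp Require Import ring zify.
Import Order.TTheory GRing.Theory Num.Theory passmx.
Set Implicit Arguments. Unset Strict Implicit. Unset Printing Implicit Defensive.
Local Open Scope ring_scope.

(* Everything rests on {1, xi0} being an o-basis of o_L.  Since
   alpha = c^-1 (xi0 + b) with c a unit and b integral, {1, alpha} is an
   o-basis as well, and alpha + x in P = p o_L would give alpha a coordinate
   in p on the basis {1, alpha}, whereas that coordinate is 1.
   In the split case the components of xi0 are the roots of X^2 + bX + ac,
   hence integral, and (z1, z2) has coordinate (z1 - z2)/sqrt d on xi0, which
   is integral because d is a unit.  In the field case z = X + Y sqrt d in o_L
   has disc(1, z) = d (2Y)^2 and disc(xi0, z) = d (X + bY)^2, both in the
   discriminant ideal d o, so 2Y and X + bY are integral; conversely x + y xi0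
   is a root of a monic quadratic over o. *)

Section Valuation.
Variables (F : fieldType) (v : F -> int).
Hypothesis hF : nonarch_local_field_char0 v.

Lemma v1 : v 1 = 0.
Proof.
have h : v 1 = v 1 + v 1 by rewrite -(v_mul hF) ?mulr1 ?oner_neq0.
lia.
Qed.

Lemma vN x : v (- x) = v x.
Proof.
have n1 : (-1 : F) != 0 by rewrite oppr_eq0 oner_neq0.
have vN1 : v (-1) = 0.
  have h : v 1 = v (-1) + v (-1) by rewrite -(v_mul hF) ?mulrNN ?mulr1.
  by move: h; rewrite v1; lia.
have [->|x0] := eqVneq x 0; first by rewrite oppr0.
by rewrite -mulN1r (v_mul hF n1 x0) vN1 add0r.
Qed.

Lemma vV x : x != 0 -> v x^-1 = - v x.
Proof.
move=> x0; have h : v 1 = v x + v x^-1 by rewrite -(v_mul hF) ?mulfV ?invr_neq0.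
by move: h; rewrite v1; lia.
Qed.

Lemma natf_eq0 n : (n%:R == 0 :> F) = (n == 0)%N.
Proof. by rewrite ((pcharf0P F).1 (char0 hF)). Qed.

(* [vge N] is the fractional ideal p^N; [vint] and [vmax] are [vge 0] and
   [vge 1] by conversion. *)
Definition vge (N : int) (x : F) := x = 0 \/ N <= v x.

Lemma vge_add N x y : vge N x -> vge N y -> vge N (x + y).
Proof.
move=> [->|hx]; first by rewrite add0r.
move=> [->|hy]; first by rewrite addr0; right.
have [->|x0] := eqVneq x 0; first by rewrite add0r; right.
have [->|y0] := eqVneq y 0; first by rewrite addr0; right.
have [s0|s0] := eqVneq (x + y) 0; [by left | right].
by apply: le_trans (v_add hF x0 y0 s0); rewrite le_min hx hy.
Qed.

Lemma vge_mul M N x y : vge M x -> vge N y -> vge (M + N) (x * y).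
Proof.
move=> [->|hx]; first by rewrite mul0r; left.
move=> [->|hy]; first by rewrite mulr0; left.
have [->|x0] := eqVneq x 0; first by rewrite mul0r; left.
have [->|y0] := eqVneq y 0; first by rewrite mulr0; left.
by right; rewrite (v_mul hF x0 y0) lerD.
Qed.

Lemma vge_opp N x : vge N x -> vge N (- x).
Proof. by move=> [->|h]; [left; rewrite oppr0 | right; rewrite vN]. Qed.

Lemma vge_le M N x : M <= N -> vge N x -> vge M x.
Proof. by move=> MN [->|h]; [left | right; apply: le_trans h]. Qed.

Lemma vint_add x y : vint v x -> vint v y -> vint v (x + y).
Proof. exact: vge_add. Qed.

Lemma vint_mul x y : vint v x -> vint v y -> vint v (x * y).
Proof. exact: (@vge_mul 0 0). Qed.

Lemma vint_opp x : vint v x -> vint v (- x).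
Proof. exact: vge_opp. Qed.

Lemma vint_sub x y : vint v x -> vint v y -> vint v (x - y).
Proof. by move=> hx hy; apply/vint_add/vint_opp. Qed.

Lemma vint0 : vint v 0.
Proof. by left. Qed.

Lemma vint1 : vint v 1.
Proof. by right; rewrite v1. Qed.

Lemma vint_nat n : vint v n%:R.
Proof. by elim: n => [|n IH]; [left | rewrite mulrS; apply/vint_add/IH/vint1]. Qed.

Lemma vint_exp x n : vint v x -> vint v (x ^+ n).
Proof.
move=> hx; elim: n => [|n IH]; first by rewrite expr0; exact: vint1.
by rewrite exprS; exact: vint_mul.
Qed.

Lemma vunit_int u : vunit v u -> vint v u.
Proof. by move=> [_ h]; right; rewrite h. Qed.

Lemma vunit_inv u : vunit v u -> vunit v u^-1.
Proof.
move=> [/eqP u0 vu]; split; first exact/eqP/invr_neq0.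
by rewrite (vV u0) vu oppr0.
Qed.

Lemma vunit_sqr s : vunit v (s ^+ 2) -> vunit v s.
Proof.
have [->|s0] := eqVneq s 0; first by rewrite expr0n; case.
by case=> _; rewrite expr2 (v_mul hF s0 s0) => vs; split; [exact/eqP | lia].
Qed.

Lemma vint_sqr y : vint v (y ^+ 2) -> vint v y.
Proof.
have [->|y0] := eqVneq y 0; first by left.
case=> [/eqP|]; first by rewrite sqrf_eq0 (negPf y0).
by rewrite expr2 (v_mul hF y0 y0) => h; right; lia.
Qed.

Lemma vmax_int x : vmax v x -> vint v x.
Proof. exact: vge_le. Qed.

Lemma vmax_add x y : vmax v x -> vmax v y -> vmax v (x + y).
Proof. exact: vge_add. Qed.

Lemma vmax_mulr x y : vmax v x -> vint v y -> vmax v (x * y).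
Proof. by move=> hx hy; have := vge_mul hx hy; rewrite addr0. Qed.

Lemma not_vmax1 : ~ vmax v 1.
Proof. by move=> [/eqP|]; [rewrite oner_eq0 | rewrite v1]. Qed.

(* If [v t < 0] then [t ^+ 2] would be strictly smaller in valuation than [b t + k]. *)
Lemma vint_quadratic_root t b k :
  t ^+ 2 + b * t + k = 0 -> vint v b -> vint v k -> vint v t.
Proof.
move=> ht hb hk; have [->|t0] := eqVneq t 0; first by left.
case: (leP 0 (v t)) => [|vt_neg]; first by right.
have vt : vge (v t) t by right.
have hbt : vge (v t) (b * t) by have := vge_mul hb vt; rewrite add0r.
have hk' : vge (v t) k by apply: vge_le hk; apply: ltW.
have := vge_opp (vge_add hbt hk').
have -> : - (b * t + k) = t ^+ 2 by apply/eqP; rewrite eq_sym -subr_eq0 opprK addrA ht.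
case=> [/eqP|]; first by rewrite sqrf_eq0 (negPf t0).
by rewrite expr2 (v_mul hF t0 t0); lia.
Qed.

Lemma vint_half_root a b c s :
  vint v a -> vint v b -> vint v c -> s ^+ 2 = b ^+ 2 - 4%:R * a * c ->
  vint v ((- b + s) / 2%:R).
Proof.
move=> ha hb hc hs; apply: (vint_quadratic_root (b := b) (k := a * c)) => //.
  have h2 : (2%:R : F) != 0 by rewrite natf_eq0.
  have h4 : (4%:R : F) != 0 by rewrite natf_eq0.
  have -> : ((- b + s) / 2%:R) ^+ 2 + b * ((- b + s) / 2%:R) + a * c
     = (s ^+ 2 - (b ^+ 2 - 4%:R * a * c)) / 4%:R by field; apply/andP.
  by rewrite hs subrr mul0r.
exact: vint_mul.
Qed.

End Valuation.

Section TwoElementBasis.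
Variables (F : fieldType) (v : F -> int) (A : lalgType F) (oA : A -> Prop).
Hypothesis hF : nonarch_local_field_char0 v.

Lemma o_basis2_shift e w : o_basis2 v oA 1 e -> vint v w -> o_basis2 v oA 1 (e + w%:A).
Proof.
case=> o1 oe span free hw.
have comb x y : x%:A + y *: (e + w%:A) = (x + y * w)%:A + y *: e.
  by rewrite scalerDr scalerA scalerDl [y *: e + _]addrC addrA.
split=> //.
- apply/span; exists w, 1; split=> //; first exact: vint1.
  by rewrite scale1r addrC.
- move=> z; split=> [/span [x [y [hx hy ->]]] | [x [y [hx hy ->]]]].
  + exists (x - y * w), y; rewrite comb subrK.
    by split=> //; exact (vint_sub hF hx (vint_mul hF hy hw)).
  + apply/span; exists (x + y * w), y; rewrite comb.
    by split=> //; exact (vint_add hF hx (vint_mul hF hy hw)).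
- move=> x y hx hy; rewrite comb => /free [].
  + exact (vint_add hF hx (vint_mul hF hy hw)).
  + exact hy.
  + by move=> + y0; rewrite y0 mul0r addr0.
Qed.

Lemma o_basis2_scale e u : o_basis2 v oA 1 e -> vunit v u -> o_basis2 v oA 1 (u *: e).
Proof.
case=> o1 oe span free hu; have [/eqP u0 _] := hu.
have [hu' hui] := (vunit_int hu, vunit_int (vunit_inv hF hu)).
split=> //.
- apply/span; exists 0, u; split=> //; first by left.
  by rewrite scale0r add0r.
- move=> z; split=> [/span [x [y [hx hy ->]]] | [x [y [hx hy ->]]]].
  + exists x, (y / u); rewrite scalerA mulfVK //.
    by split=> //; exact (vint_mul hF hy hui).
  + apply/span; exists x, (y * u); rewrite scalerA.
    by split=> //; exact (vint_mul hF hy hu').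
- move=> x y hx hy; rewrite scalerA => /free [].
  + exact hx.
  + exact (vint_mul hF hy hu').
  + by move=> -> /eqP; rewrite mulf_eq0 (negPf u0) orbF => /eqP.
Qed.

Lemma ext_ideal_coord e z : o_basis2 v oA 1 e -> ext_ideal v oA z ->
  exists U W, [/\ vmax v U, vmax v W & z = U%:A + W *: e].
Proof.
case=> _ _ span _ [s [+ ->]].
elim: s => [|q s IH] hs.
  by exists 0, 0; rewrite big_nil !scale0r addr0; split=> //; left.
have hs' q' : q' \in s -> vmax v q'.1 /\ oA q'.2.
  by move=> hq'; apply: hs; rewrite inE hq' orbT.
rewrite big_cons; have [U [W [hU hW ->]]] := IH hs'.
have [hq1 /span [x [y [hx hy ->]]]] := hs q (mem_head q s).
exists (q.1 * x + U), (q.1 * y + W); split.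
- exact (vmax_add hF (vmax_mulr hF hq1 hx) hU).
- exact (vmax_add hF (vmax_mulr hF hq1 hy) hW).
- by rewrite scalerDr !scalerA addrACA -!scalerDl.
Qed.

Lemma o_basis2_notin_ext_ideal e : o_basis2 v oA 1 e ->
  ~ exists x, vint v x /\ ext_ideal v oA (e + x%:A).
Proof.
move=> B [x [hx /(ext_ideal_coord B) [U [W [hU hW]]]]]; have [_ _ _ free] := B.
move/eqP; rewrite -subr_eq0 => /eqP.
have -> : e + x%:A - (U%:A + W *: e) = (x - U)%:A + (1 - W) *: e.
  by rewrite !scalerBl scale1r opprD [RHS]addrACA [e + _]addrC.
case/free.
- exact (vint_sub hF hx (vmax_int hU)).
- exact (vint_sub hF (vint1 hF) (vmax_int hW)).
- by move=> _ /eqP; rewrite subr_eq0 => /eqP W1; apply: (not_vmax1 hF); rewrite W1.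
Qed.

End TwoElementBasis.

Section SplitAlgebra.
Variables (F : fieldType) (v : F -> int).
Hypothesis hF : nonarch_local_field_char0 v.

Lemma split_o_basis a b c s :
  vint v a -> vint v b -> vint v c -> vunit v s -> s ^+ 2 = b ^+ 2 - 4%:R * a * c ->
  o_basis2 v (intSplit v) 1 (((- b + s) / 2%:R, (- b - s) / 2%:R) : (F^o * F^o)%type).
Proof.
move=> ha hb hc hsu hs; have [/eqP s0 _] := hsu.
have h2 : (2%:R : F) != 0 by rewrite (natf_eq0 hF).
set xi1 := (- b + s) / 2%:R; set xi2 := (- b - s) / 2%:R.
have hxi1 : vint v xi1 by apply: (vint_half_root hF ha hb hc).
have hxi2 : vint v xi2 by apply: (vint_half_root hF ha hb hc); rewrite sqrrN.
have hsi : vint v s^-1 := vunit_int (vunit_inv hF hsu).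
have comb x y : x%:A + y *: ((xi1, xi2) : F^o * F^o) = (x + y * xi1, x + y * xi2).
  by apply: injective_projections; rewrite /= /GRing.scale /= mulr1.
have xi12 : xi1 - xi2 = s by rewrite /xi1 /xi2; field.
split=> //.
- by split; apply: vint1.
- move=> [z1 z2]; split=> [[/= hz1 hz2] | [x [y [hx hy ->]]]].
  + have hy : vint v ((z1 - z2) / s) := vint_mul hF (vint_sub hF hz1 hz2) hsi.
    exists (z1 - (z1 - z2) / s * xi1), ((z1 - z2) / s); rewrite comb.
    split=> //; first exact (vint_sub hF hz1 (vint_mul hF hy hxi1)).
    congr (_, _); first by rewrite subrK.
    by rewrite /xi1 /xi2; field; apply/andP.
  + rewrite comb; split.
    * exact (vint_add hF hx (vint_mul hF hy hxi1)).
    * exact (vint_add hF hx (vint_mul hF hy hxi2)).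
- move=> x y hx hy; rewrite comb => -[e1 e2].
  have : y * s = (x + y * xi1) - (x + y * xi2) by rewrite -xi12; ring.
  move/eqP; rewrite e1 e2 subrr mulf_eq0 (negPf s0) orbF => /eqP y0.
  by move: e1; rewrite y0 mul0r addr0.
Qed.
End SplitAlgebra.

Lemma det_mx22 (R : comNzRingType) (M : 'M[R]_2) : \det M = M 0 0 * M 1 1 - M 0 1 * M 1 0.
Proof.
rewrite (expand_det_row _ 0) !big_ord_recl big_ord0 /cofactor !det_mx11 !mxE /=.
have -> : lift (0 : 'I_2) (0 : 'I_1) = 1 by apply: val_inj.
have -> : lift (1 : 'I_2) (0 : 'I_1) = 0 by apply: val_inj.
by rewrite expr0 expr1 !mul1r addr0 mulN1r mulrN.
Qed.

(* If [\tr M != 0], the (0, 1) entry of [M *m M] forces [M 0 1 = 0], and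
   then [d = M 0 0 ^+ 2]. *)
Lemma mxtrace_sqr_nonsquare (F : fieldType) n (M : 'M[F]_n) (d : F) :
  n = 2%N -> M *m M = d%:M -> ~ is_square d -> \tr M = 0.
Proof.
move=> E; subst n => hM hd.
have l01 : lift (0 : 'I_2) (0 : 'I_1) = 1 by apply: val_inj.
have sqrE i j : (M *m M) i j = M i 0 * M 0 j + M i 1 * M 1 j.
  by rewrite mxE !big_ord_recl big_ord0 addr0 l01.
have := sqrE 0 0; have := sqrE 0 1; rewrite hM !mxE /= mulr1n mulr0n => e01 e00.
rewrite /mxtrace !big_ord_recl big_ord0 addr0 l01.
apply/eqP/negPn/negP => t0.
have m01 : M 0 1 = 0.
  by apply/eqP; move: e01 => /esym/eqP; rewrite mulrC -mulrDr mulf_eq0 (negPf t0) orbF.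
by apply: hd; exists (M 0 0); rewrite e00 m01 mul0r addr0 expr2.
Qed.

Lemma alpha_xi0E (F : fieldType) (V : lmodType F) (p r : V) (b c : F) :
  (2%:R : F) != 0 -> c != 0 ->
  (2%:R * c)^-1 *: (b *: p + r) = c^-1 *: (2%:R^-1 *: (- (b *: p) + r) + b *: p).
Proof.
move=> h2 c0; rewrite -scaleNr !scalerDr !scalerA addrAC -scalerDl.
by congr (_ *: _ + _ *: _); [field; apply/andP | rewrite invfM mulrC].
Qed.

Section QuadraticExtension.
Variables (F : fieldType) (L : fieldExtType F) (r : L) (d : F).
Hypothesis hr : r ^+ 2 = d%:A.

Definition comb1r (X Y : F) : L := in_alg L X + in_alg L Y * r.

Lemma comb1rE X Y : comb1r X Y = X%:A + Y *: r.
Proof. by rewrite /comb1r mulr_algl. Qed.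

Lemma comb1r_mul X Y X' Y' :
  comb1r X Y * comb1r X' Y' = comb1r (X * X' + Y * Y' * d) (X * Y' + Y * X').
Proof.
have rr : d%:A = r * r by rewrite -expr2 hr.
by rewrite /comb1r !rmorphD !rmorphM /= rr; ring.
Qed.

Lemma comb1r_affine x y X Y : x%:A + y *: comb1r X Y = comb1r (x + y * X) (y * Y).
Proof. by rewrite !comb1rE scalerDr !scalerA addrA -scalerDl. Qed.

Lemma adjoin_degree_le2 : (adjoin_degree 1%VS r <= 2)%N.
Proof.
have hp : 'X^2 - (d%:A : L)%:P \is a polyOver (1%AS : {subfield L}).
  by rewrite polyOverXnsubC memvZ ?mem1v.
have hroot : root ('X^2 - (d%:A : L)%:P) r by rewrite /root !hornerE hr subrr.
have := dvdp_leq _ (minPoly_dvdp hp hroot).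
by rewrite size_minPoly size_XnsubC // -size_poly_eq0 size_XnsubC //; apply.
Qed.

Lemma comb1r_surj (hfull : <<1%VS; r>>%VS = fullv) z : exists X Y, z = comb1r X Y.
Proof.
have hz : z \in <<1%VS; r>>%VS by rewrite hfull memvf.
have hs : (size (Fadjoin_poly 1%VS r z) <= 2)%N.
  exact: leq_trans (size_Fadjoin_poly _ _ _) adjoin_degree_le2.
have /polyOverP hc := Fadjoin_polyOver 1%VS r z.
rewrite -(Fadjoin_poly_eq hz) (horner_coef_wide _ hs) !big_ord_recl big_ord0 addr0 /=.
have [X ->] := vlineP _ _ (hc 0%N); have [Y ->] := vlineP _ _ (hc 1%N).
by exists X, Y; rewrite expr0 mulr1 expr1.
Qed.

Hypothesis hsq : ~ is_square d.

Lemma r_notin1 : r \notin 1%VS.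
Proof.
apply/negP => /vlineP [k rk]; apply: hsq; exists k.
by apply: (fmorph_inj (in_alg L)); rewrite rmorphXn /= -rk hr.
Qed.

Lemma comb1r_eq0 X Y : comb1r X Y = 0 -> X = 0 /\ Y = 0.
Proof.
rewrite /comb1r => h; have [Y0|Y0] := eqVneq Y 0.
  by move: h; rewrite Y0 rmorph0 mul0r addr0 => /eqP; rewrite fmorph_eq0 => /eqP.
case/negP: r_notin1; apply/vlineP; exists (- X / Y).
have Y0' : in_alg L Y != 0 by rewrite fmorph_eq0.
have hYr : in_alg L Y * r = in_alg L (- X).
  by rewrite rmorphN; apply/eqP; rewrite -addr_eq0 addrC h.
by rewrite -[r](mulKf Y0') hYr -fmorphV -rmorphM mulrC.
Qed.

Hypothesis hfull : <<1%VS; r>>%VS = fullv.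

Lemma dimL_eq2 : \dim {:L} = 2%N.
Proof.
have deg_neq1 : adjoin_degree 1%VS r != 1%N by rewrite adjoin_deg_eq1 r_notin1.
have deg_gt0 : (0 < adjoin_degree 1%VS r)%N by rewrite ltn0Sn.
rewrite -hfull dim_Fadjoin dimv1 muln1.
by move: adjoin_degree_le2 deg_neq1 deg_gt0; case: (adjoin_degree _ _) => [|[|[|]]].
Qed.

Lemma trL_r : trL r = 0.
Proof.
apply: (mxtrace_sqr_nonsquare (d := d)) => //; first exact: dimL_eq2.
rewrite -mxof_comp; last exact: vbasisP.
have -> : (amulr r \o amulr r)%VF = amulr (r * r) by rewrite rmorphM.
rewrite -expr2 hr linearZ /= rmorph1 linearZ /= mxof1 ?scalemx1 //.
exact: basis_free (vbasisP fullv).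
Qed.

Lemma trL_comb1r X Y : trL (comb1r X Y) = 2%:R * X.
Proof.
rewrite comb1rE /trL !linearP /= !linearZ /= -/(trL r) trL_r mulr0 addr0 rmorph1.
rewrite mxof1; last exact: basis_free (vbasisP fullv).
by rewrite mxtrace1 dimL_eq2 mulrC.
Qed.

Lemma disc2_comb1r X Y X' Y' :
  disc2 (comb1r X Y) (comb1r X' Y') = 4%:R * d * (X * Y' - X' * Y) ^+ 2.
Proof. by rewrite /disc2 det_mx22 !mxE /= !comb1r_mul !trL_comb1r; ring. Qed.

End QuadraticExtension.

Section IntegralClosure.
Variables (F : fieldType) (v : F -> int) (L : fieldExtType F).
Hypothesis hF : nonarch_local_field_char0 v.

Lemma intL_quadratic (t : L) B K :
  vint v B -> vint v K -> (t + in_alg L B) * t + in_alg L K = 0 -> intL v t.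
Proof.
move=> hB hK ht; exists (('X + B%:P) * 'X + K%:P); split.
- have hm : ('X + B%:P) * 'X \is monic by rewrite monicMl ?monicXaddC ?monicX.
  rewrite monicE lead_coefDl; first exact: hm.
  rewrite size_mulX ?monic_neq0 ?monicXaddC // size_XaddC.
  exact: leq_ltn_trans (size_polyC_leq1 _) _.
- move=> [|[|[|i]]]; rewrite coefD coefMX coefD coefX !coefC /= ?addr0 ?add0r //;
    by [left | exact: vint1].
- rewrite /root !rmorphD !rmorphM /= map_polyX !map_polyC /= map_polyXaddC !hornerE.
  by apply/eqP.
Qed.

Lemma intL1 : intL v (1 : L).
Proof.
apply: (intL_quadratic (B := -1) (K := 0)); [exact/vint_opp/vint1 | exact: vint0 |].
by rewrite rmorphN rmorph1 subrr mul0r rmorph0 addr0.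
Qed.

Lemma intL_comb1r (r : L) d X Y : r ^+ 2 = d%:A ->
  vint v (2%:R * X) -> vint v (X ^+ 2 - Y ^+ 2 * d) -> intL v (comb1r r X Y).
Proof.
move=> hr h1 h2; apply: (intL_quadratic (vint_opp hF h1) h2).
have rr : d%:A = r * r by rewrite -expr2 hr.
by rewrite /comb1r !rmorphD ?rmorphB ?rmorphN ?rmorphM ?rmorphXn ?rmorph_nat /= rr; ring.
Qed.

End IntegralClosure.

Section FieldCase.
Variables (F : fieldType) (v : F -> int) (L : fieldExtType F) (r : L) (a b c : F).
Local Notation d := (b ^+ 2 - 4%:R * a * c).
Local Notation xi0 := (comb1r r (- b / 2%:R) 2%:R^-1).
Hypothesis hF : nonarch_local_field_char0 v.
Hypotheses (ha : vint v a) (hb : vint v b) (hc : vint v c).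
Hypotheses (hsq : ~ is_square d) (hr : r ^+ 2 = d%:A) (hfull : <<1%VS; r>>%VS = fullv).
Hypothesis hgen : generates_disc_ideal v L d.

Let h2 : (2%:R : F) != 0. Proof. by rewrite (natf_eq0 hF). Qed.

Lemma intL_xi0_comb x y : vint v x -> vint v y -> intL v (x%:A + y *: xi0).
Proof.
move=> hx hy; rewrite comb1r_affine; apply: (intL_comb1r hF hr).
  have -> : 2%:R * (x + y * (- b / 2%:R)) = 2%:R * x - y * b by field.
  exact (vint_sub hF (vint_mul hF (vint_nat hF 2) hx) (vint_mul hF hy hb)).
have -> : (x + y * (- b / 2%:R)) ^+ 2 - (y * 2%:R^-1) ^+ 2 * d
    = x ^+ 2 - x * y * b + y ^+ 2 * (a * c) by field.
have hxyb := vint_mul hF (vint_mul hF hx hy) hb.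
exact (vint_add hF (vint_sub hF (vint_exp hF 2 hx) hxyb)
                   (vint_mul hF (vint_exp hF 2 hy) (vint_mul hF ha hc))).
Qed.

Lemma intL_xi0 : intL v xi0.
Proof.
by have := intL_xi0_comb (vint0 v) (vint1 hF); rewrite scale0r add0r scale1r.
Qed.

Lemma intL_xi0_coords z :
  intL v z -> exists x y, [/\ vint v x, vint v y & z = x%:A + y *: xi0].
Proof.
move=> hz; have [X [Y zE]] := comb1r_surj hr hfull z.
have d0 : d != 0 by apply: contra_notN hsq => /eqP d0; exists 0; rewrite d0 expr0n.
have disc_ideal u : intL v u -> exists2 k, vint v k & disc2 u z = k * d.
  move=> hu; apply/hgen; exists [:: (1, (u, z))]; split; last by rewrite big_seq1 mul1r.
  by move=> q; rewrite inE => /eqP -> /=; split=> //; apply: vint1.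
have [k1 hk1 e1] := disc_ideal 1 (intL1 L hF).
have [k2 hk2 e2] := disc_ideal _ intL_xi0.
have one_comb : (1 : L) = comb1r r 1 0 by rewrite comb1rE scale0r addr0 scale1r.
rewrite zE one_comb (disc2_comb1r hr hsq hfull) in e1.
rewrite zE (disc2_comb1r hr hsq hfull) in e2.
have hY : vint v (2%:R * Y).
  apply: (vint_sqr hF); suff -> : (2%:R * Y) ^+ 2 = k1 by [].
  by apply: (mulIf d0); rewrite -e1; field.
have hX : vint v (X + b * Y).
  apply: (vint_sqr hF); suff -> : (X + b * Y) ^+ 2 = k2 by [].
  by apply: (mulIf d0); rewrite -e2; field.
exists (X + b * Y), (2%:R * Y); split=> //.
by rewrite zE comb1r_affine; congr comb1r; field.
Qed.

Lemma field_o_basis : o_basis2 v (intL v (L:=L)) 1 (2%:R^-1 *: (- b%:A + r)).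
Proof.
have -> : 2%:R^-1 *: (- b%:A + r) = xi0.
  by rewrite comb1rE scalerDr scalerN scalerA -scaleNr mulrC mulNr.
split; [exact: intL1 | exact: intL_xi0 |..].
- move=> z; split; first exact: intL_xi0_coords.
  by move=> [x [y [hx hy ->]]]; apply: intL_xi0_comb.
- move=> x y hx hy; rewrite comb1r_affine => /(comb1r_eq0 hr hsq) [ex ey].
  have y0 : y = 0 by move/eqP: ey; rewrite mulf_eq0 invr_eq0 (negPf h2) orbF => /eqP.
  by split=> //; move: ex; rewrite y0 mul0r addr0.
Qed.

End FieldCase.

Theorem mainTheorem7 (F : fieldType) (v : F -> int)
  (hF : nonarch_local_field_char0 v) (a b c : F) :
  let d := b ^+ 2 - 4%:R * a * c in
  d != 0 ->
  (* (A1) *)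
  vint v a -> vint v b -> vunit v c ->
  (* case L = F(sqrt d) a field *)
  (~ is_square d ->
     forall (L : fieldExtType F) (r : L),
       r ^+ 2 = d%:A -> <<1%VS; r>>%VS = fullv ->
       (* (A2), field case *)
       generates_disc_ideal v L d ->
       let xi0 := 2%:R^-1 *: (- b%:A + r) in
       let alpha := (2%:R * c)^-1 *: (b%:A + r) in
       [/\ o_basis2 v (intL v (L:=L)) 1 xi0,
           o_basis2 v (intL v (L:=L)) 1 alpha &
           ~ exists x, vint v x /\ ext_ideal v (intL v (L:=L)) (alpha + x%:A)])
  /\
  (* case L = F + F *)
  (is_square d ->
     (* (A2), split case *)
     vunit v d ->
     forall s : F, s ^+ 2 = d ->
       let xi0 : (F^o * F^o)%type := ((- b + s) / 2%:R, (- b - s) / 2%:R) in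
       let alpha : (F^o * F^o)%type := ((b + s) / (2%:R * c), (b - s) / (2%:R * c)) in
       [/\ o_basis2 v (intSplit v) 1 xi0,
           o_basis2 v (intSplit v) 1 alpha &
           ~ exists x, vint v x /\ ext_ideal v (intSplit v) (alpha + x%:A)]).
Proof.
move=> d _ ha hb hc; have [/eqP c0 _] := hc.
have h2 : (2%:R : F) != 0 by rewrite (natf_eq0 hF).
have [hc' hci] := (vunit_int hc, vunit_inv hF hc).
split.
- move=> hsq L r hr hfull hgen xi0 alpha.
  have B1 : o_basis2 v (intL v (L:=L)) 1 xi0 := field_o_basis hF ha hb hc' hsq hr hfull hgen.
  have B2 : o_basis2 v (intL v (L:=L)) 1 alpha.
    by rewrite /alpha alpha_xi0E //; exact (o_basis2_scale hF (o_basis2_shift hF B1 hb) hci).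
  by split=> //; exact (o_basis2_notin_ext_ideal hF B2).
- move=> _ hdu s hs xi0 alpha.
  have hsu : vunit v s by apply: (vunit_sqr hF); rewrite hs.
  have B1 : o_basis2 v (intSplit v) 1 xi0 := split_o_basis hF ha hb hc' hsu hs.
  have alphaE : alpha = c^-1 *: (xi0 + b%:A).
    by apply: injective_projections; rewrite /= /GRing.scale /= mulr1; field; apply/andP.
  have B2 : o_basis2 v (intSplit v) 1 alpha.
    by rewrite alphaE; exact (o_basis2_scale hF (o_basis2_shift hF B1 hb) hci).
  by split=> //; exact (o_basis2_notin_ext_ideal hF B2).
Qed.
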